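(* Let $R$ be a tolerance relation on $\{1,\ldots,n\}$ and $A=A(R)$. Let $\mathcal{D}(A)$ be the set of $\rho\in A$ with $\rho\succeq 0$ and $\mathrm{Tr}(\rho)=1$. Then the map $\mathcal{D}(A)\to\mathcal{S}(A)$, $\rho\mapsto\varphi_\rho$, where $\varphi_\rho(a)=\mathrm{Tr}(\rho^*a)$ for $a\in A$, is a bijection; moreover it is a homeomorphism when $\mathcal{D}(A)$ carries the norm topology and $\mathcal{S}(A)$ the weak-$*$ topology.
   Context: A tolerance relation on a set is a reflexive and symmetric relation. $T:M_n(\mathbb{C})\to M_n(\mathbb{C})$ is $T(b)=\sum_{(i,j)\in R}E_{ii}bE_{jj}$, and $A(R)=T(M_n(\mathbb{C}))$ (matrices vanishing at positions outside $R$). For $a\in A$, $a\succeq 0$ means $a=T(b)$ for some positive semidefinite $b\in M_n(\mathbb{C})$. $\mathcal{S}(A)$ is the set of states of the operator system $A$: linear functionals $\varphi:A\to\mathbb{C}$ with $\varphi(a)\ge0$ for every positive semidefinite $a\in A$ and $\varphi(1)=1$. *)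

From HB Require Import structures.
From mathcomp Require Import all_boot all_order all_algebra.
From mathcomp Require Import complex.
From mathcomp Require Import reals.
Set Implicit Arguments. Unset Strict Implicit. Unset Printing Implicit Defensive.
Import Order.TTheory GRing.Theory Num.Theory.
Local Open Scope ring_scope.

Section Defs.
Variables (R : realType) (n : nat).
Local Notation C := (R[i]).
Implicit Types (rel : rel 'I_n) (a b rho : 'M[C]_n).

Definition tolerance rel := reflexive rel /\ symmetric rel.

Definition adjmx (m p : nat) (M : 'M[C]_(m, p)) : 'M[C]_(p, m) :=
  (map_mx (@conjc R) M)^T.

Definition psd b := forall v : 'cV[C]_n, 0 <= (adjmx v *m b *m v) ord0 ord0.

(* T(b) = sum_{(i,j) in R} E_ii b E_jj *)
Definition Tmap rel b : 'M[C]_n :=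
  \matrix_(i, j) (if rel i j then b i j else 0).

(* membership in A(R) = T(M_n(C)): vanishing outside R *)
Definition in_A rel a := forall i j, ~~ rel i j -> a i j = 0.

Definition succeq0 rel a := exists2 b, psd b & a = Tmap rel b.

Definition in_D rel rho := succeq0 rel rho /\ \tr rho = 1.

(* states of the operator system A; a functional is represented by a
   function on all of M_n(C), only its restriction to A matters *)
Definition is_state rel (phi : 'M[C]_n -> C) :=
  [/\ forall (c : C) a b, in_A rel a -> in_A rel b ->
        phi (c *: a + b) = c * phi a + phi b,
      forall a, in_A rel a -> psd a -> 0 <= phi a
    & phi 1%:M = 1].

Definition phi_of rho : 'M[C]_n -> C := fun a => \tr (adjmx rho *m a).

(* a norm on M_n(C) (all norms are equivalent in finite dimension) *)
Definition mxnorm a : C := \sum_i \sum_j `|a i j|.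
End Defs.

(* The state attached to [rho = T b] with [b >= 0] is [a |-> tr (b a)] on
   [A], because [T] is the Schur multiplier by the symmetric pattern [R]; it
   is positive since [tr (b a) >= 0] for positive semidefinite [a] and [b]
   (diagonalise [a] unitarily).  Continuity is the bound
   [|phi_rho a| <= |rho| |a|]; injectivity and continuity of the inverse
   follow by testing against the matrix units [E_ij], [(i, j) \in R], which
   lie in [A] and satisfy [phi_rho E_ij = (rho i j)^*].  For surjectivity, the
   real part of a state is a positive real-linear functional on [A], which
   contains the order unit [1]; Krein's extension theorem, applied one vector
   of a real basis of the Hermitian matrices at a time, extends it to a
   positive functional [g] on all Hermitian matrices.  Complexifying [g] gives
   [x |-> tr (b x)] with [b >= 0], and [T b] is the required density. *)

From mathcomp Require Import all_boot all_order all_algebra.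
From mathcomp Require Import complex reals classical_sets.
From mathcomp Require Import ring lra.
From Stdlib Require Import ClassicalEpsilon.
Import Order.TTheory GRing.Theory Num.Theory.
Local Open Scope complex_scope.
Local Open Scope ring_scope.
Set Implicit Arguments. Unset Strict Implicit. Unset Printing Implicit Defensive.

Section Adjoint.
Variable R : realType.
Local Notation C := R[i].

Lemma adjmxE m p (A : 'M[C]_(m, p)) i j : adjmx A i j = (A j i)^*.
Proof. by rewrite !mxE. Qed.

Lemma adjmxK m p (A : 'M[C]_(m, p)) : adjmx (adjmx A) = A.
Proof. by apply/matrixP => i j; rewrite !mxE conjcK. Qed.

Lemma adjmxD m p (A B : 'M[C]_(m, p)) : adjmx (A + B) = adjmx A + adjmx B.
Proof. by apply/matrixP => i j; rewrite !mxE rmorphD. Qed.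

Lemma adjmxN m p (A : 'M[C]_(m, p)) : adjmx (- A) = - adjmx A.
Proof. by apply/matrixP => i j; rewrite !mxE rmorphN. Qed.

Lemma adjmxZ m p (c : C) (A : 'M[C]_(m, p)) : adjmx (c *: A) = c^* *: adjmx A.
Proof. by rewrite /adjmx map_mxZ linearZ. Qed.

Lemma adjmxM m p q (A : 'M[C]_(m, p)) (B : 'M[C]_(p, q)) :
  adjmx (A *m B) = adjmx B *m adjmx A.
Proof. by rewrite /adjmx map_mxM trmx_mul. Qed.

Lemma adjmx_delta m p i j : adjmx (delta_mx i j : 'M[C]_(m, p)) = delta_mx j i.
Proof. by rewrite /adjmx map_delta_mx trmx_delta. Qed.

Definition hermitian m (x : 'M[C]_m) : Prop := adjmx x = x.

Lemma hermitianZ m (r : R) (x : 'M[C]_m) : hermitian x -> hermitian (r%:C *: x).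
Proof. by rewrite /hermitian adjmxZ => ->; congr (_ *: _); apply: conjc_real. Qed.

End Adjoint.

Arguments hermitian {R m} x.

Section PositiveSemidefinite.
Variables (R : realType) (n : nat).
Local Notation C := R[i].
Local Notation M := 'M[C]_n.
Implicit Types (a b e : M) (v w : 'cV[C]_n).

Definition qform b v w : C := (adjmx v *m b *m w) ord0 ord0.

Lemma qformDl b v1 v2 w : qform b (v1 + v2) w = qform b v1 w + qform b v2 w.
Proof. by rewrite /qform adjmxD !mulmxDl mxE. Qed.

Lemma qformDr b v w1 w2 : qform b v (w1 + w2) = qform b v w1 + qform b v w2.
Proof. by rewrite /qform mulmxDr mxE. Qed.

Lemma qformZl b c v w : qform b (c *: v) w = c^* * qform b v w.
Proof. by rewrite /qform adjmxZ -!scalemxAl mxE. Qed.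

Lemma qformZr b c v w : qform b v (c *: w) = c * qform b v w.
Proof. by rewrite /qform -scalemxAr mxE. Qed.

Lemma qformD a b v w : qform (a + b) v w = qform a v w + qform b v w.
Proof. by rewrite /qform mulmxDr mulmxDl mxE. Qed.

Lemma qformZ c b v w : qform (c *: b) v w = c * qform b v w.
Proof. by rewrite /qform -scalemxAr -scalemxAl mxE. Qed.

Lemma qform_delta b p q : qform b (delta_mx p ord0) (delta_mx q ord0) = b p q.
Proof. by rewrite /qform adjmx_delta -rowE -colE !mxE. Qed.

Lemma qformE b v w :
  qform b v w = \sum_p \sum_q (v p ord0)^* * b p q * w q ord0.
Proof.
rewrite /qform mxE exchange_big; apply: eq_bigr => q _.
by rewrite mxE big_distrl; apply: eq_bigr => p _; rewrite !mxE.
Qed.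

Lemma qform1 v : qform 1%:M v v = \sum_k `|v k ord0| ^+ 2.
Proof.
by rewrite /qform mulmx1 mxE; apply: eq_bigr => k _; rewrite sqr_normc !mxE mulrC.
Qed.

Lemma qform_mxtrace b v : qform b v v = \tr (b *m (v *m adjmx v)).
Proof. by rewrite /qform -trace_mx11 mxtrace_mulC !mulmxA mxtrace_mulC mulmxA. Qed.

Lemma qform_hermitian_real e v : hermitian e -> (qform e v v)^* = qform e v v.
Proof. by move=> he; rewrite /qform -adjmxE !adjmxM adjmxK he mulmxA. Qed.

(* Positivity of the quadratic form at [e_p], [e_q], [e_p + e_q] and
   [e_p + i e_q] forces [b q p = (b p q)^*]. *)
Lemma psd_hermitian b : psd b -> hermitian b.
Proof.
move=> pb; apply/matrixP => p q; rewrite adjmxE.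
pose ep : 'cV[C]_n := delta_mx p ord0; pose eq : 'cV[C]_n := delta_mx q ord0.
have hIm v : complex.Im (qform b v v) = 0 := ger0_Im (pb v).
move: (hIm ep) (hIm eq) (hIm (ep + eq)) (hIm (ep + 'i *: eq)).
rewrite !(qformDl, qformDr, qformZl, qformZr) !qform_delta conjCi.
case: (b p p) => ? ?; case: (b q q) => ? ?; case: (b p q) => x y.
case: (b q p) => x' y'; simpc => /= -> -> e1 e2; congr Complex; lra.
Qed.

Lemma psdD a b : psd a -> psd b -> psd (a + b).
Proof.
move=> pa pb v; rewrite -/(qform _ _ _) qformD.
exact: addr_ge0 (pa v) (pb v).
Qed.

Lemma psdZ (r : R) b : 0 <= r -> psd b -> psd (r%:C *: b).
Proof.
move=> r0 pb v; rewrite -/(qform _ _ _) qformZ.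
by apply: mulr_ge0 (pb v); rewrite lecR.
Qed.

Lemma psd_outer v : psd (v *m adjmx v).
Proof.
move=> w; rewrite mulmxA -mulmxA -[adjmx v *m w]adjmxK adjmxM adjmxK.
by rewrite mxE big_ord1 adjmxE mulcJ_ge0.
Qed.

Lemma mxnorm_ge0 e : 0 <= mxnorm e.
Proof. by apply: sumr_ge0 => i _; apply: sumr_ge0 => j _; apply: normr_ge0. Qed.

Lemma norm_qform_le e v :
  `|qform e v v| <= mxnorm e * \sum_k `|v k ord0| ^+ 2.
Proof.
set N := \sum_k _.
have vN p q : `|v p ord0| * `|v q ord0| <= N.
  suff : `|v p ord0| * `|v q ord0| *+ 2 <= N *+ 2 by rewrite lerMn2r.
  apply: le_trans (real_leif_mean_square_scaled _ _) _; rewrite ?realE ?normr_ge0 //.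
  have vkN k : `|v k ord0| ^+ 2 <= N.
    by rewrite /N (bigD1 k) //= lerDl; apply: sumr_ge0 => l _; apply: exprn_ge0.
  by rewrite mulr2n; apply: lerD.
rewrite qformE /mxnorm mulr_suml; apply: le_trans (ler_norm_sum _ _ _) _.
apply: ler_sum => p _; rewrite mulr_suml.
apply: le_trans (ler_norm_sum _ _ _) _; apply: ler_sum => q _.
rewrite !normrM normcJ mulrAC mulrC.
by rewrite ler_wpM2l.
Qed.

(* [c = mxnorm e] works, by [norm_qform_le]. *)
Lemma psd_order_unit e : hermitian e -> exists c : R, psd (c%:C *: 1%:M + e).
Proof.
move=> he; have e0 := mxnorm_ge0 e.
exists (complex.Re (mxnorm e)) => v; rewrite -/(qform _ _ _) qformD qformZ qform1.
have re : qform e v v \is Num.real by apply/CrealP; apply: qform_hermitian_real.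
have -> : (complex.Re (mxnorm e))%:C = mxnorm e.
  by move/ger0_Im: e0; case: (mxnorm e) => x y /= ->.
rewrite addrC -[X in 0 <= _ + X]opprK subr_ge0.
exact: real_lerNnormlW re (norm_qform_le e v).
Qed.
End PositiveSemidefinite.

Section TracePositivity.
Variables (R : realType) (n : nat).
Local Notation C := R[i].
Local Notation M := 'M[C]_n.
Implicit Types (a b : M).

Lemma adjmx_trmxC (A : M) : adjmx A = (A ^t*)%sesqui.
Proof. by apply/matrixP => i j; rewrite !mxE. Qed.

Lemma mulmx_adj_diag (X Y : M) k :
  (X *m Y *m adjmx X) k k = qform Y (adjmx (row k X)) (adjmx (row k X)).
Proof.
rewrite /qform adjmxK !mxE; apply: eq_bigr => l _; rewrite !mxE.
by congr (_ * _); apply: eq_bigr => p _; rewrite !mxE.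
Qed.

Lemma psd_mxtraceM_ge0 a b : psd a -> psd b -> 0 <= \tr (b *m a).
Proof.
move=> pa pb; have an : a \is normalmx.
  by apply/normalmxP; rewrite -adjmx_trmxC (psd_hermitian pa).
have /orthomx_spectralP := an.
set P := spectralmx a; set d := spectral_diag a.
have Pu : P \is unitarymx := spectral_unitarymx a.
rewrite invmx_unitary // -adjmx_trmxC => ea.
have PP : P *m adjmx P = 1%:M by move/unitarymxP: Pu; rewrite -adjmx_trmxC.
have hd : diag_mx d = P *m a *m adjmx P.
  by rewrite ea !mulmxA PP mul1mx -mulmxA PP mulmx1.
have -> : \tr (b *m a) = \tr ((P *m b *m adjmx P) *m diag_mx d).
  by rewrite [in LHS]ea !mulmxA mxtrace_mulC !mulmxA.
rewrite mul_mx_diag /mxtrace; apply: sumr_ge0 => k _; rewrite mxE.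
apply: mulr_ge0; first by rewrite mulmx_adj_diag; apply: pb.
have -> : d ord0 k = diag_mx d k k by rewrite mxE eqxx mulr1n.
by rewrite hd mulmx_adj_diag; apply: pa.
Qed.
End TracePositivity.

Section KreinExtension.
Variables (R : realType) (n : nat).
Local Notation C := R[i].
Local Notation M := 'M[C]_n.
Implicit Types (W : M -> Prop) (f : M -> R) (e w x y : M).

Definition unital_subspace W :=
  [/\ forall x y, W x -> W y -> W (x + y),
      forall (r : R) x, W x -> W (r%:C *: x) & W 1%:M].

Definition positive_functional W f :=
  [/\ forall x y, W x -> W y -> f (x + y) = f x + f y,
      forall (r : R) x, W x -> f (r%:C *: x) = r * f x
    & forall x, W x -> psd x -> 0 <= f x].

Definition adjoin W e x := exists w (s : R), W w /\ x = w + s%:C *: e.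

Lemma scalecK (s : R) x : s != 0 -> s^-1%:C *: (s%:C *: x) = x.
Proof. by move=> s0; rewrite scalerA -rmorphM mulVf // scale1r. Qed.

Section AdjoinOne.
Variables (W : M -> Prop) (f : M -> R) (e : M).
Hypotheses (subW : unital_subspace W) (posf : positive_functional W f).

Definition separating_value (t : R) :=
  (forall w, W w -> psd (w + e) -> - f w <= t) /\
  (forall w, W w -> psd (w - e) -> t <= f w).

Lemma subspace0 : W 0.
Proof. by case: subW => _ WZ W1; rewrite -(scale0r 1%:M) -[0]/(0%:C); apply: WZ. Qed.

Lemma subspaceB x y : W x -> W y -> W (x - y).
Proof.
case: subW => WD WZ _ Wx Wy; apply: WD => //.
by have := WZ (-1) _ Wy; rewrite rmorphN1 scaleN1r.
Qed.

Lemma sub_adjoin x : W x -> adjoin W e x.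
Proof. by move=> Wx; exists x, 0; rewrite scale0r addr0. Qed.

Lemma adjoin_self : adjoin W e e.
Proof. by exists 0, 1; rewrite scale1r add0r; split=> //; apply: subspace0. Qed.

Lemma adjoin_subspace : unital_subspace (adjoin W e).
Proof.
case: subW => WD WZ W1; split; last exact: sub_adjoin.
- move=> _ _ [w1 [s1 [W1w ->]]] [w2 [s2 [W2w ->]]].
  exists (w1 + w2), (s1 + s2); split; first exact: WD.
  by rewrite rmorphD scalerDl addrACA.
- move=> r _ [w [s [Ww ->]]]; exists (r%:C *: w), (r * s); split; first exact: WZ.
  by rewrite scalerDr scalerA rmorphM.
Qed.

Lemma adjoin_coord_uniq w1 w2 (s1 s2 : R) : ~ W e -> W w1 -> W w2 ->
  w1 + s1%:C *: e = w2 + s2%:C *: e -> s1 = s2 /\ w1 = w2.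
Proof.
move=> We Ww1 Ww2; have [-> eq12 | s12 eq12] := eqVneq s1 s2.
  by split=> //; apply: (addIr (s2%:C *: e)).
exfalso; apply: We; case: subW => _ WZ _.
have -> : e = (s2 - s1)^-1%:C *: (w1 - w2).
  rewrite -[LHS](scalecK e (_ : s2 - s1 != 0)); last by rewrite subr_eq0 eq_sym.
  congr (_ *: _); apply/eqP; rewrite rmorphB scalerBl subr_eq addrAC eq_sym.
  by rewrite subr_eq eq12 addrC.
exact/WZ/subspaceB.
Qed.

(* Take [t = sup {- f w | w \in W, w + e >= 0}]; the set is nonempty and
   bounded above because [1 \in W] is an order unit. *)
Lemma separating_value_exists : hermitian e -> exists t, separating_value t.
Proof.
move=> he; case: subW => WD WZ W1; case: posf => fD fZ f0.
have [c1 pc1] := psd_order_unit he.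
have [c2 pc2] : exists c : R, psd (c%:C *: 1%:M - e).
  by apply: psd_order_unit; rewrite /hermitian adjmxN he.
have cancel_e w w' : psd (w + e) -> psd (w' - e) -> psd (w + w').
  by move=> p p'; have := psdD p p'; rewrite addrACA subrr addr0.
pose S := [set y : R | exists w, [/\ W w, psd (w + e) & y = - f w]]%classic.
have S0 : (S !=set0)%classic.
  by exists (- f (c1%:C *: 1%:M)), (c1%:C *: 1%:M); split=> //; apply: WZ.
have Sub w' : W w' -> psd (w' - e) -> (ubound S)%classic (f w').
  move=> Ww' pw' _ [w [Ww pw ->]].
  by have := f0 _ (WD _ _ Ww Ww') (cancel_e _ _ pw pw'); rewrite fD //; lra.
exists (sup S); split.
- move=> w Ww pw; apply: ub_le_sup; last by exists w.
  by exists (f (c2%:C *: 1%:M)); apply: Sub => //; apply: WZ.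
- by move=> w' Ww' pw'; apply: ge_sup => //; apply: Sub.
Qed.

Lemma adjoin_functional_ge0 (t : R) w (s : R) : separating_value t ->
  W w -> psd (w + s%:C *: e) -> 0 <= f w + s * t.
Proof.
move=> [tlow tup] Ww; case: subW => _ WZ _; case: posf => _ fZ f0.
have [s_lt0 | s_gt0 | ->] := ltgtP s 0 => pw; last first.
- by rewrite mul0r addr0; apply: f0; move: pw; rewrite scale0r addr0.
- have s0 : s != 0 by rewrite gt_eqF.
  have := tlow _ (WZ s^-1 _ Ww); rewrite fZ //.
  have -> : s^-1%:C *: w + e = s^-1%:C *: (w + s%:C *: e) by rewrite scalerDr scalecK.
  have si : 0 <= s^-1 by rewrite invr_ge0 ltW.
  move=> /(_ (psdZ si pw)) h.
  have := ler_wpM2l (ltW s_gt0) h; rewrite mulrN mulrA mulfV // mul1r; lra.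
- have s0 : - s != 0 by rewrite oppr_eq0 lt_eqF.
  have := tup _ (WZ (- s)^-1 _ Ww); rewrite fZ //.
  have -> : (- s)^-1%:C *: w - e = (- s)^-1%:C *: (w + s%:C *: e).
    by rewrite scalerDr -[in s%:C](opprK s) rmorphN scaleNr scalerN scalecK.
  have si : 0 <= (- s)^-1 by rewrite invr_ge0 oppr_ge0 ltW.
  move=> /(_ (psdZ si pw)) h.
  have := ler_wpM2l (_ : 0 <= - s) h; rewrite mulrA mulfV // mul1r; lra.
Qed.

Lemma krein_step : hermitian e ->
  exists g, positive_functional (adjoin W e) g /\ forall x, W x -> g x = f x.
Proof.
move=> he; case: (subW) => WD WZ _; case: (posf) => fD fZ f0.
have [We | We] := classic (W e).
  have Wadj x : adjoin W e x -> W x by move=> [w [s [Ww ->]]]; apply/WD/WZ.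
  exists f; split=> //; split=> [x y /Wadj Wx /Wadj Wy | r x /Wadj Wx | x /Wadj Wx];
    by [apply: fD | apply: fZ | apply: f0].
have [t sep] := separating_value_exists he.
pose coord x (p : M * R) := W p.1 /\ x = p.1 + p.2%:C *: e.
pose g x := let p := epsilon (inhabits (0, 0)) (coord x) in f p.1 + p.2 * t.
have gE w s : W w -> g (w + s%:C *: e) = f w + s * t.
  move=> Ww; rewrite /g.
  have [|Ww' eq'] := @epsilon_spec _ (inhabits (0, 0)) (coord (w + s%:C *: e)).
    by exists (w, s).
  by have [-> ->] := adjoin_coord_uniq We Ww' Ww (esym eq').
exists g; split; last first.
  by move=> x Wx; have := gE x 0 Wx; rewrite scale0r !addr0 mul0r addr0.
split.
- move=> _ _ [w1 [s1 [Ww1 ->]]] [w2 [s2 [Ww2 ->]]].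
  rewrite addrACA -scalerDl -rmorphD !gE ?fD //; last exact: WD.
  by rewrite mulrDl addrACA.
- move=> r _ [w [s [Ww ->]]].
  rewrite scalerDr scalerA -rmorphM !gE ?fZ //; last exact: WZ.
  by rewrite mulrDr mulrA.
- by move=> _ [w [s [Ww ->]]] pw; rewrite gE //; apply: adjoin_functional_ge0.
Qed.

End AdjoinOne.

Fixpoint adjoin_seq W (es : seq M) : M -> Prop :=
  if es is e :: es' then adjoin (adjoin_seq W es') e else W.

Lemma adjoin_seq_subspace W es : unital_subspace W -> unital_subspace (adjoin_seq W es).
Proof. by move=> subW; elim: es => [|e es IH] //=; apply: adjoin_subspace. Qed.

Lemma sub_adjoin_seq W es x : W x -> adjoin_seq W es x.
Proof. by move=> Wx; elim: es => [|e es IH] //=; apply: sub_adjoin. Qed.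

Lemma adjoin_seq_mem W es e : unital_subspace W -> e \in es -> adjoin_seq W es e.
Proof.
move=> subW; elim: es => [|e' es IH] //=; rewrite in_cons => /orP[/eqP -> | /IH].
  exact/adjoin_self/adjoin_seq_subspace.
exact: sub_adjoin.
Qed.

Lemma krein_extension W f es : unital_subspace W -> positive_functional W f ->
  (forall e, e \in es -> hermitian e) ->
  exists g, positive_functional (adjoin_seq W es) g /\ forall x, W x -> g x = f x.
Proof.
move=> subW posf; elim: es => [|e es IH] hes /=; first by exists f.
have [g1 [posg1 g1f]] : exists g, positive_functional (adjoin_seq W es) g /\
    forall x, W x -> g x = f x.
  by apply: IH => e' e'es; apply: hes; rewrite in_cons e'es orbT.
have [g2 [posg2 g2g1]] :=
  krein_step (adjoin_seq_subspace es subW) posg1 (hes e (mem_head _ _)).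
by exists g2; split=> // x Wx; rewrite g2g1 ?g1f //; apply: sub_adjoin_seq.
Qed.

End KreinExtension.

Section HermitianParts.
Variables (R : realType) (n : nat).
Local Notation C := R[i].
Local Notation M := 'M[C]_n.
Implicit Types (x y h : M).

Definition re2mx x := x + adjmx x.
Definition im2mx x := - 'i *: (x - adjmx x).

Lemma re2mx_hermitian x : hermitian (re2mx x).
Proof. by rewrite /hermitian /re2mx adjmxD adjmxK addrC. Qed.

Lemma im2mx_hermitian x : hermitian (im2mx x).
Proof.
apply/matrixP => k l; rewrite /im2mx !mxE.
case: (x k l) => ? ?; case: (x l k) => ? ?; simpc; congr Complex; ring.
Qed.

Lemma re2mx0 : re2mx 0 = 0.
Proof. by apply/matrixP => i j; rewrite !mxE conjc0 addr0. Qed.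

Lemma re2mxD x y : re2mx (x + y) = re2mx x + re2mx y.
Proof. by rewrite /re2mx adjmxD addrACA. Qed.

Lemma im2mxD x y : im2mx (x + y) = im2mx x + im2mx y.
Proof. by rewrite /im2mx adjmxD opprD addrACA scalerDr. Qed.

Lemma re2mxZ (c : C) x :
  re2mx (c *: x) = (complex.Re c)%:C *: re2mx x + (- complex.Im c)%:C *: im2mx x.
Proof.
apply/matrixP => k l; rewrite /re2mx /im2mx !mxE.
case: c => ? ?; case: (x k l) => ? ?; case: (x l k) => ? ?.
by rewrite -!complexr0 /conjc /=; simpc; congr Complex; ring.
Qed.

Lemma im2mxZ (c : C) x :
  im2mx (c *: x) = (complex.Im c)%:C *: re2mx x + (complex.Re c)%:C *: im2mx x.
Proof.
apply/matrixP => k l; rewrite /re2mx /im2mx !mxE.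
case: c => ? ?; case: (x k l) => ? ?; case: (x l k) => ? ?.
by rewrite -!complexr0 /conjc /=; simpc; congr Complex; ring.
Qed.

Lemma re2mx_im2mx x : re2mx x + 'i *: im2mx x = x *+ 2.
Proof.
apply/matrixP => k l; rewrite /re2mx /im2mx !mxE.
case: (x k l) => ? ?; case: (x l k) => ? ?.
by rewrite /conjc /=; simpc; congr Complex; ring.
Qed.

Lemma re2mx_hermitianE h : hermitian h -> re2mx h = h *+ 2.
Proof. by rewrite /re2mx => ->; rewrite mulr2n. Qed.

Lemma im2mx_hermitianE h : hermitian h -> im2mx h = 0.
Proof. by rewrite /im2mx => ->; rewrite subrr scaler0. Qed.

Definition hermitian_basis : seq M :=
  [seq re2mx (delta_mx p.1 p.2) | p <- enum {: 'I_n * 'I_n}] ++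
  [seq im2mx (delta_mx p.1 p.2) | p <- enum {: 'I_n * 'I_n}].

Lemma hermitian_basis_hermitian e : e \in hermitian_basis -> hermitian e.
Proof.
rewrite mem_cat => /orP[] /mapP[p _ ->].
  exact: re2mx_hermitian.
exact: im2mx_hermitian.
Qed.

(* [h = 2^-1 re2mx h], and [re2mx] is real-linear in the entries of [h]. *)
Lemma hermitian_span W h : unital_subspace W -> hermitian h ->
  adjoin_seq W hermitian_basis h.
Proof.
move=> subW hh; have [VD VZ _] := adjoin_seq_subspace hermitian_basis subW.
have V0 := subspace0 (adjoin_seq_subspace hermitian_basis subW).
have -> : h = (2^-1 : R)%:C *: re2mx h.
  rewrite re2mx_hermitianE // -scaler_nat scalerA -(rmorph_nat (real_complex R)).
  by rewrite -rmorphM mulVf ?pnatr_eq0 // scale1r.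
apply: (VZ); rewrite [h in re2mx h]matrix_sum_delta (big_morph _ re2mxD re2mx0).
apply: (big_ind _ V0 VD) => i _; rewrite (big_morph _ re2mxD re2mx0).
apply: (big_ind _ V0 VD) => j _; rewrite re2mxZ; apply: (VD); apply: (VZ);
  apply: adjoin_seq_mem; rewrite // mem_cat; apply/orP; [left | right];
  by apply/mapP; exists (i, j); rewrite ?mem_enum.
Qed.

Lemma positive_extension_hermitian W f :
  unital_subspace W -> positive_functional W f ->
  exists g, positive_functional hermitian g /\ forall x, W x -> g x = f x.
Proof.
move=> subW posf.
have [g [[gD gZ g0] gf]] := krein_extension subW posf hermitian_basis_hermitian.
have span h : hermitian h -> adjoin_seq W hermitian_basis h := hermitian_span subW.
exists g; split=> //; split=> [x y /span ? /span ? | r x /span ? | x /span ?];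
  by [apply: gD | apply: gZ | apply: g0].
Qed.

End HermitianParts.

#[local] Hint Resolve re2mx_hermitian im2mx_hermitian : core.

Section TraceRepresentation.
Variables (R : realType) (n : nat).
Local Notation C := R[i].
Local Notation M := 'M[C]_n.

Lemma mxtrace_mul_delta (x : M) i j : \tr (x *m delta_mx i j) = x j i.
Proof.
rewrite /mxtrace (bigD1 j) //= big1 ?addr0 => [|k kj].
  rewrite mxE (bigD1 i) //= big1 ?addr0 => [|k ki]; first by rewrite mxE !eqxx mulr1.
  by rewrite mxE (negbTE ki) mulr0.
by rewrite mxE big1 // => l _; rewrite mxE (negbTE kj) andbF mulr0.
Qed.

Lemma mxtrace_repr (G : M -> C) :
  (forall x y, G (x + y) = G x + G y) -> (forall c x, G (c *: x) = c * G x) ->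
  forall x, \tr (\matrix_(p, q) G (delta_mx q p) *m x) = G x.
Proof.
move=> GD GZ x; have G0 : G 0 = 0 by rewrite -(scale0r 0) GZ mul0r.
rewrite {2}[x]matrix_sum_delta exchange_big (big_morph G GD G0) /mxtrace.
apply: eq_bigr => p _; rewrite mxE (big_morph G GD G0); apply: eq_bigr => q _.
by rewrite !mxE GZ mulrC.
Qed.

Section Complexify.
Variable g : M -> R.
Hypotheses (gD : forall {x y}, hermitian x -> hermitian y -> g (x + y) = g x + g y)
  (gZ : forall (r : R) {x}, hermitian x -> g (r%:C *: x) = r * g x).

Definition complexify x : C := 2^-1 * ((g (re2mx x))%:C + 'i * (g (im2mx x))%:C).

Lemma complexifyD x y : complexify (x + y) = complexify x + complexify y.
Proof.
rewrite /complexify re2mxD im2mxD (gD (re2mx_hermitian x) (re2mx_hermitian y)).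
by rewrite (gD (im2mx_hermitian x) (im2mx_hermitian y)) !rmorphD; ring.
Qed.

Lemma complexifyZ c x : complexify (c *: x) = c * complexify x.
Proof.
have hZ r y : hermitian y -> hermitian (r%:C *: y) := @hermitianZ R n r y.
rewrite /complexify re2mxZ im2mxZ.
rewrite !(gD (hZ _ _ (re2mx_hermitian x)) (hZ _ _ (im2mx_hermitian x))).
rewrite !(gZ _ (re2mx_hermitian x)) !(gZ _ (im2mx_hermitian x)) mulrCA.
congr (_ * _).
move: (g (re2mx x)) (g (im2mx x)) => u v; case: c => a b /=.
by rewrite -!complexr0; simpc; congr Complex; ring.
Qed.

Lemma complexify_hermitian h : hermitian h -> complexify h = (g h)%:C.
Proof.
move=> hh; rewrite /complexify re2mx_hermitianE // im2mx_hermitianE //.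
have -> : g 0 = 0 by have := gZ 0 hh; rewrite scale0r mul0r.
rewrite mulr0 addr0 [h *+ 2]mulr2n (gD hh hh) rmorphD -mulr2n.
by rewrite -[X in _ * X]mulr_natl mulKf ?pnatr_eq0.
Qed.

End Complexify.

Lemma psd_trace_repr (g : M -> R) : positive_functional hermitian g ->
  exists2 b, psd b & forall h, hermitian h -> \tr (b *m h) = (g h)%:C.
Proof.
case=> gD gZ g0.
have trb := mxtrace_repr (complexifyD gD) (complexifyZ gD gZ).
exists (\matrix_(p, q) complexify g (delta_mx q p)) => [v | h hh].
  have hv : hermitian (v *m adjmx v) by rewrite /hermitian adjmxM adjmxK.
  rewrite -/(qform _ _ _) qform_mxtrace trb complexify_hermitian // lecR.
  exact: g0 (psd_outer v).
by rewrite trb complexify_hermitian.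
Qed.
End TraceRepresentation.

Section DensityFunctionals.
Variables (R : realType) (n : nat).
Local Notation C := R[i].
Local Notation M := 'M[C]_n.
Implicit Types (a x rho : M).

Lemma phi_ofB rho1 rho2 a : phi_of (rho1 - rho2) a = phi_of rho1 a - phi_of rho2 a.
Proof. by rewrite /phi_of adjmxD adjmxN mulmxBl raddfB. Qed.

Lemma phi_of_delta rho i j : phi_of rho (delta_mx i j) = (rho i j)^*.
Proof. by rewrite /phi_of mxtrace_mul_delta adjmxE. Qed.

Lemma normr_le_mxnorm x i j : `|x i j| <= mxnorm x.
Proof.
rewrite /mxnorm (bigD1 i) //= (bigD1 j) //= -addrA lerDl.
by apply: addr_ge0; apply: sumr_ge0 => *; [|apply: sumr_ge0 => *]; apply: normr_ge0.
Qed.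

Lemma norm_phi_of_le rho a : `|phi_of rho a| <= mxnorm rho * mxnorm a.
Proof.
rewrite /phi_of /mxtrace /mxnorm exchange_big mulr_suml.
apply: le_trans (ler_norm_sum _ _ _) _; apply: ler_sum => k _.
rewrite mxE mulr_suml; apply: le_trans (ler_norm_sum _ _ _) _.
apply: ler_sum => l _; rewrite !mxE normrM normcJ.
by rewrite ler_wpM2l ?normr_le_mxnorm.
Qed.

Lemma phi_of_continuous rho0 (s : seq M) (eps : C) : 0 < eps ->
  exists2 delta : C, 0 < delta &
    forall rho, mxnorm (rho - rho0) < delta ->
      forall a, a \in s -> `|phi_of rho a - phi_of rho0 a| < eps.
Proof.
move=> eps0; pose K := 1 + \sum_(a <- s) mxnorm a.
have sumK0 : 0 <= \sum_(a <- s) mxnorm a by apply: sumr_ge0 => a _; apply: mxnorm_ge0.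
have K0 : 0 < K by apply: lt_le_trans ltr01 _; rewrite lerDl.
exists (eps / K) => [|rho near a sa]; first exact: divr_gt0.
have aK : mxnorm a <= K.
  rewrite /K (big_rem a) //= addrCA lerDl addr_ge0 //.
  by apply: sumr_ge0 => b _; apply: mxnorm_ge0.
rewrite -phi_ofB; apply: le_lt_trans (norm_phi_of_le _ _) _.
apply: le_lt_trans (ler_wpM2l (mxnorm_ge0 _) aK) _.
by rewrite -ltr_pdivlMr.
Qed.

End DensityFunctionals.

Section OperatorSystem.
Variables (R : realType) (n : nat) (rel : rel 'I_n).
Hypotheses (rel_refl : reflexive rel) (rel_sym : symmetric rel).
Local Notation C := R[i].
Local Notation M := 'M[C]_n.
Local Notation in_A := (@in_A R n rel).
Implicit Types (a b x y rho : M).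

Lemma in_A0 : in_A 0.
Proof. by move=> i j _; rewrite mxE. Qed.

Lemma in_AD x y : in_A x -> in_A y -> in_A (x + y).
Proof. by move=> Ax Ay i j ij; rewrite mxE Ax // Ay // addr0. Qed.

Lemma in_AZ (c : C) x : in_A x -> in_A (c *: x).
Proof. by move=> Ax i j ij; rewrite mxE Ax // mulr0. Qed.

Lemma in_A1 : in_A 1%:M.
Proof. by move=> i j ij; rewrite mxE; case: eqP ij => // ->; rewrite rel_refl. Qed.

Lemma in_A_adjmx x : in_A x -> in_A (adjmx x).
Proof. by move=> Ax i j ij; rewrite adjmxE Ax ?rmorph0 // rel_sym. Qed.

Lemma in_A_re2mx x : in_A x -> in_A (re2mx x).
Proof. by move=> Ax; apply/in_AD/in_A_adjmx. Qed.

Lemma in_A_im2mx x : in_A x -> in_A (im2mx x).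
Proof.
by move=> Ax; apply/in_AZ/in_AD => //; rewrite -scaleN1r; apply/in_AZ/in_A_adjmx.
Qed.

Lemma in_A_Tmap b : in_A (Tmap rel b).
Proof. by move=> i j ij; rewrite mxE (negbTE ij). Qed.

Lemma in_A_delta i j : rel i j -> in_A (delta_mx i j).
Proof.
by move=> ij k l; rewrite mxE; case: eqP => [-> | //]; case: eqP => [-> | //]; rewrite ij.
Qed.

Lemma A_unital_subspace : unital_subspace in_A.
Proof. by split=> [x y | r x |]; [apply: in_AD | apply: in_AZ | apply: in_A1]. Qed.

Lemma mxtrace_TmapM b a : in_A a -> \tr (Tmap rel b *m a) = \tr (b *m a).
Proof.
move=> Aa; apply: eq_bigr => i _; rewrite !mxE; apply: eq_bigr => j _.
by rewrite mxE; case: ifPn => // ij; rewrite Aa ?mulr0 // rel_sym.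
Qed.

Lemma adjmx_Tmap b : adjmx (Tmap rel b) = Tmap rel (adjmx b).
Proof. by apply/matrixP => i j; rewrite !mxE rel_sym; case: ifP; rewrite ?rmorph0. Qed.

Lemma phi_of_Tmap a b : psd b -> in_A a -> phi_of (Tmap rel b) a = \tr (b *m a).
Proof. by move=> pb Aa; rewrite /phi_of adjmx_Tmap (psd_hermitian pb) mxtrace_TmapM. Qed.

Lemma mxtrace_re2mx_im2mx a b :
  \tr (b *m a) *+ 2 = \tr (b *m re2mx a) + 'i * \tr (b *m im2mx a).
Proof. by rewrite -mxtraceZ scalemxAr -mxtraceD -mulmxDr re2mx_im2mx !raddfMn. Qed.

Section State.
Variable phi : M -> C.
Hypothesis phi_state : is_state rel phi.

Lemma stateD x y : in_A x -> in_A y -> phi (x + y) = phi x + phi y.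
Proof.
by case: phi_state => lin _ _ Ax Ay; have := lin 1 x y Ax Ay; rewrite scale1r mul1r.
Qed.

Lemma state0 : phi 0 = 0.
Proof. by have A0 := in_A0; apply: (addIr (phi 0)); rewrite -stateD // !addr0 add0r.
Qed.

Lemma stateZ (c : C) x : in_A x -> phi (c *: x) = c * phi x.
Proof.
case: phi_state => lin _ _ Ax.
by have := lin c x 0 Ax in_A0; rewrite !addr0 state0 addr0.
Qed.

(* [c 1 + h >= 0] for some real [c], so [c + phi h = phi (c 1 + h) >= 0]. *)
Lemma state_hermitian_real h : in_A h -> hermitian h ->
  (complex.Re (phi h))%:C = phi h.
Proof.
move=> Ah hh; have [c pc] := psd_order_unit hh; case: phi_state => _ pos phi1.
have Ac1 := in_AZ c%:C in_A1; have := pos _ (in_AD Ac1 Ah) pc.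
rewrite stateD // stateZ; last exact: in_A1.
rewrite phi1 mulr1 => /ger0_Im.
by case: (phi h) => x y; simpc => /= ->.
Qed.

Lemma state_Re_positive : positive_functional in_A (fun x => complex.Re (phi x)).
Proof.
case: (phi_state) => _ pos _; split=> [x y Ax Ay | r x Ax | x Ax px].
- by rewrite stateD // raddfD.
- by rewrite stateZ //; case: (phi x) => ? ?; simpc.
- by move: (pos x Ax px); case: (phi x) => ? ?; rewrite lecE => /andP[].
Qed.

Lemma state_re2mx_im2mx a : in_A a ->
  phi a *+ 2 = phi (re2mx a) + 'i * phi (im2mx a).
Proof.
move=> Aa; have Are := in_A_re2mx Aa; have Aim := in_A_im2mx Aa.
rewrite -stateZ // -stateD //; last exact: in_AZ.
by rewrite re2mx_im2mx mulr2n stateD.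
Qed.
End State.

Lemma in_D_in_A rho : in_D rel rho -> in_A rho.
Proof. by case=> [[b _ ->] _]; apply: in_A_Tmap. Qed.

Lemma phi_of_state rho : in_D rel rho -> is_state rel (phi_of rho).
Proof.
case=> [[b pb ->] tr1]; split.
- by move=> c a a' _ _; rewrite /phi_of mulmxDr -scalemxAr mxtraceD mxtraceZ.
- by move=> a Aa pa; rewrite phi_of_Tmap //; apply: psd_mxtraceM_ge0.
- have A1 := in_A1.
  by rewrite phi_of_Tmap // mulmx1 -tr1 -[Tmap rel b]mulmx1 mxtrace_TmapM // mulmx1.
Qed.

Lemma phi_of_inj rho1 rho2 : in_A rho1 -> in_A rho2 ->
  (forall a, in_A a -> phi_of rho1 a = phi_of rho2 a) -> rho1 = rho2.
Proof.
move=> A1 A2 eq12; apply/matrixP => i j.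
have [ij | nij] := boolP (rel i j); last by rewrite A1 ?A2.
by rewrite -[LHS]conjCK -phi_of_delta eq12 ?phi_of_delta ?conjCK //; apply: in_A_delta.
Qed.

Lemma phi_of_surj (phi : M -> C) : is_state rel phi ->
  exists2 rho, in_D rel rho & forall a, in_A a -> phi_of rho a = phi a.
Proof.
move=> st; have [g [posg gf]] :=
  positive_extension_hermitian A_unital_subspace (state_Re_positive st).
have [b pb trb] := psd_trace_repr posg.
have tr_herm h : in_A h -> hermitian h -> \tr (b *m h) = phi h.
  by move=> Ah hh; rewrite trb // gf // state_hermitian_real.
have trE a : in_A a -> \tr (b *m a) = phi a.
  move=> Aa; have Are := in_A_re2mx Aa; have Aim := in_A_im2mx Aa.
  apply: (pmulrnI (_ : 0 < 2)%N) => //.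
  by rewrite mxtrace_re2mx_im2mx state_re2mx_im2mx // !tr_herm.
exists (Tmap rel b) => [|a Aa]; last by rewrite (phi_of_Tmap pb Aa) trE.
split; first by exists b.
have A1 := in_A1.
by rewrite -[Tmap rel b]mulmx1 mxtrace_TmapM // trE //; case: st.
Qed.

Lemma phi_of_inv_continuous (eps : C) : 0 < eps ->
  exists (s : seq M) (delta : C), [/\ forall a, a \in s -> in_A a, 0 < delta &
    forall rho rho0, in_A rho -> in_A rho0 ->
      (forall a, a \in s -> `|phi_of rho a - phi_of rho0 a| < delta) ->
      mxnorm (rho - rho0) < eps].
Proof.
move=> eps0; pose N : C := (n * n).+1%:R; have N0 : 0 < N by rewrite ltr0n.
pose s : seq M := [seq delta_mx p.1 p.2 | p <- enum {: 'I_n * 'I_n} & rel p.1 p.2].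
exists s, (eps / N); split=> [a /mapP[p] | | rho rho0 A A0 near].
- by rewrite mem_filter => /andP[ij _] ->; apply: in_A_delta.
- exact: divr_gt0.
have entry i j : `|(rho - rho0) i j| <= eps / N.
  have [ij | nij] := boolP (rel i j); last first.
    by rewrite !mxE A ?A0 // subr0 normr0 ltW ?divr_gt0.
  have sij : delta_mx i j \in s.
    by apply/mapP; exists (i, j); rewrite // mem_filter /= ij mem_enum.
  by have /ltW := near _ sij; rewrite -phi_ofB phi_of_delta norm_conjC.
apply: le_lt_trans (_ : _ <= \sum_(i < n) \sum_(j < n) eps / N) _.
  by apply: ler_sum => i _; apply: ler_sum => j _.
rewrite !sumr_const !card_ord -mulrnA -mulr_natr mulrAC ltr_pdivrMr //.
by rewrite ltr_pM2l // ltr_nat.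
Qed.

End OperatorSystem.

Theorem corollary4p8 (R : realType) (n : nat) (rel : rel 'I_n) :
  tolerance rel ->
  [/\ (* rho |-> phi_rho maps D(A) into S(A) *)
      (forall rho : 'M[R[i]]_n, in_D rel rho -> is_state rel (phi_of rho)),
      (* injective (functionals compared on A) *)
      (forall rho1 rho2 : 'M[R[i]]_n, in_D rel rho1 -> in_D rel rho2 ->
         (forall a, in_A rel a -> phi_of rho1 a = phi_of rho2 a) -> rho1 = rho2),
      (* surjective *)
      (forall phi : 'M[R[i]]_n -> R[i], is_state rel phi ->
         exists2 rho, in_D rel rho & forall a, in_A rel a -> phi_of rho a = phi a),
      (* continuous: norm topology on D(A) -> weak-* topology on S(A) *)
      (forall rho0 : 'M[R[i]]_n, in_D rel rho0 ->
         forall (s : seq 'M[R[i]]_n) (eps : R[i]),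
           (forall a, a \in s -> in_A rel a) -> 0 < eps ->
           exists2 delta : R[i], 0 < delta &
             forall rho, in_D rel rho -> mxnorm (rho - rho0) < delta ->
               forall a, a \in s -> `|phi_of rho a - phi_of rho0 a| < eps)
    & (* inverse continuous: weak-* topology on S(A) -> norm topology on D(A) *)
      (forall rho0 : 'M[R[i]]_n, in_D rel rho0 ->
         forall eps : R[i], 0 < eps ->
           exists (s : seq 'M[R[i]]_n) (delta : R[i]),
             [/\ forall a, a \in s -> in_A rel a, 0 < delta &
               forall rho : 'M[R[i]]_n, in_D rel rho ->
                 (forall a, a \in s -> `|phi_of rho a - phi_of rho0 a| < delta) ->
                 mxnorm (rho - rho0) < eps])].
Proof.
case=> refl sym; split.
- by move=> rho; apply: phi_of_state.
- by move=> rho1 rho2 /in_D_in_A A1 /in_D_in_A A2; apply: phi_of_inj.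
- by move=> phi; apply: phi_of_surj.
- move=> rho0 _ s eps _ /(phi_of_continuous rho0 s) [delta delta0 near].
  by exists delta => // rho _; apply: near.
- move=> rho0 /in_D_in_A A0 eps /(phi_of_inv_continuous rel) [s [delta [sA delta0 near]]].
  by exists s, delta; split=> // rho /in_D_in_A A; apply: near.
Qed.
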